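(* Let $\Gamma$ be an infinite group generated by a finite set $X$ and let $\pi:\mathbb F_X\to\Gamma$ be the canonical projection. Then $\overline\mu(\ker\pi)=0$; equivalently, $\ker\pi$ is LB-negligible.
   Context: $\mathbb F_X$ is the free group on $X$, $|\omega|$ the reduced word length, $B_n=\{\omega\in\mathbb F_X:|\omega|\le n\}$. For $S\subset\mathbb F_X$, $\overline\mu(S)=\limsup_{n\to\infty}\max_{\omega\in\mathbb F_X}\frac{|S\cap\omega B_n|}{|B_n|}$ and $\underline\mu(S)=\liminf_{n\to\infty}\min_{\omega\in\mathbb F_X}\frac{|S\cap\omega B_n|}{|B_n|}$. A set is LB-generic if $\underline\mu=1$, and $N$ is LB-negligible if its complement is LB-generic, i.e. $\overline\mu(N)=0$. *)

From HB Require Import structures.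
From mathcomp Require Import all_boot all_order all_algebra.
From mathcomp Require Import boolp classical_sets cardinality reals topology sequences.
Set Implicit Arguments. Unset Strict Implicit. Unset Printing Implicit Defensive.
Import Order.TTheory GRing.Theory Num.Theory.

Section FreeGroup.
Variable X : finType.

(* a letter is x^{+1} (false) or x^{-1} (true) *)
Definition letter := (X * bool)%type.
Definition linv (a : letter) : letter := (a.1, ~~ a.2).

Fixpoint reduced (w : seq letter) : bool :=
  match w with
  | a :: ((b :: _) as w') => (b != linv a) && reduced w'
  | _ => true
  end.

Definition red_cons (a : letter) (w : seq letter) : seq letter :=
  match w with
  | b :: w' => if b == linv a then w' else a :: w
  | [::] => [:: a]
  end.
Definition reduce (w : seq letter) : seq letter := foldr red_cons [::] w.

(* elements of F_X are the reduced words; product = reduced concatenation;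
   |w| = size w for a reduced word w *)
Definition fmul (u v : seq letter) : seq letter := reduce (u ++ v).

Fixpoint words (k : nat) : seq (seq letter) :=
  if k is k'.+1 then [seq a :: w | a <- enum {: letter}, w <- words k']
  else [:: [::]].

Definition ball (n : nat) : seq (seq letter) :=
  undup [seq w <- flatten [seq words k | k <- iota 0 n.+1] | reduced w].

Definition tball (om : seq letter) (n : nat) : seq (seq letter) :=
  undup [seq fmul om b | b <- ball n].

Definition ratio {R : realType} (S : set (seq letter)) (om : seq letter)
  (n : nat) : R :=
  ((count (fun v => `[< S v >]) (tball om n))%:R / (size (ball n))%:R)%R.

(* max over omega in F_X of the ratio (a max of finitely many values) *)
Definition max_ratio {R : realType} (S : set (seq letter)) (n : nat) : R :=
  sup [set r : R | exists om, reduced om /\ r = ratio S om n].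

Definition upper_density {R : realType} (S : set (seq letter)) : R :=
  limn_sup (fun n => @max_ratio R S n).

End FreeGroup.

Definition is_group (G : Type) (mul : G -> G -> G) (one : G) (inv : G -> G) :=
  [/\ forall a b c, mul a (mul b c) = mul (mul a b) c,
      forall a, mul one a = a &
      forall a, mul (inv a) a = one].

Section Projection.
Variables (X : finType) (G : Type) (mul : G -> G -> G) (one : G) (inv : G -> G)
          (g : X -> G).

Definition gen_of (a : letter X) : G := if a.2 then inv (g a.1) else g a.1.

Definition proj (w : seq (letter X)) : G :=
  foldr (fun a acc => mul (gen_of a) acc) one w.

Definition kerproj : set (seq (letter X)) :=
  [set w | reduced w /\ proj w = one].

Definition generates : Prop := forall y : G, exists w, proj w = y.
End Projection.

From HB Require Import structures.
From mathcomp Require Import all_boot all_order all_algebra.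
From mathcomp Require Import boolp classical_sets cardinality reals topology sequences normedtype.
From mathcomp Require Import zify ring lra.
Set Implicit Arguments. Unset Strict Implicit. Unset Printing Implicit Defensive.
Import Order.TTheory GRing.Theory Num.Theory numFieldNormedType.Exports.

(* Since ker pi meets omega B_n exactly in the b in B_n with pi b = (pi omega)^-1,
   it suffices that each fibre of pi holds a vanishing fraction of B_n, uniformly
   in the fibre.  If |X| = 1, the group is infinite cyclic and pi is injective on
   reduced words.  Otherwise let nu_k(t, d) count the reduced words of length k
   with first letter t and image d, and e_k = sum_(t, d) nu_k(t, d)^2 / |S_k|^2.
   Prepending letters shows that e is nonincreasing, and by Lagrange's identity
   e_(k+1) - e_(k+2) bounds (nu_(k+1)(t, d) - nu_(k+1)(t', d))^2 / |S_(k+1)|^2.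
   So where e has almost stopped decreasing, nu is almost independent of the first
   letter; at two consecutive such levels, nu_(k+1)(t, .) is almost invariant under
   left multiplication by a product of two generators, hence by the image of any
   short even word.  An infinite group offers arbitrarily many such images, so no
   fibre of the sphere S_k, hence of the ball B_n, keeps a fixed fraction of it. *)

Lemma sum_nat_bool (T : finType) (P : pred T) : \sum_(a : T) (P a : nat) = #|P|.
Proof.
by rewrite -sum1_card [RHS]big_mkcond; apply: eq_bigr => a _; rewrite unfold_in; case: (P a).
Qed.

Lemma sum_fibre_products (I T : eqType) (f : I -> T) (s1 s2 : seq I)
    (p q : pred I) (ys : seq T) :
  uniq ys -> {in s1, forall u, f u \in ys} ->
  \sum_(y <- ys) (\sum_(u <- s1) (p u && (f u == y))) * (\sum_(v <- s2) (q v && (f v == y))) =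
  \sum_(u <- s1) \sum_(v <- s2) (p u && q v && (f u == f v)).
Proof.
move=> uys ys_f; under eq_bigr do rewrite big_distrlr.
rewrite exchange_big; apply: eq_big_seq => u u_s1; rewrite exchange_big; apply: eq_bigr => v _.
rewrite (bigD1_seq (f u)) ?ys_f //= big1 ?addn0 => [|y y_fu].
  by rewrite eqxx eq_sym; case: (p u); case: (q v); case: (f u == f v).
by rewrite eq_sym (negbTE y_fu) andbF mul0n.
Qed.

Lemma count_le1 (T : eqType) (s : seq T) (P : pred T) :
  uniq s -> {in s &, forall x y, P x -> P y -> x = y} -> (count P s <= 1)%N.
Proof.
move=> us P_inj; rewrite -size_filter.
case e : [seq z <- s | P z] => [//|x r]; rewrite -[1%N]/(size [:: x]) -e.
apply: uniq_leq_size; first exact: filter_uniq.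
have : x \in [seq z <- s | P z] by rewrite e mem_head.
rewrite mem_filter => /andP [Px xs] y; rewrite mem_filter inE => /andP [Py ys].
by rewrite (P_inj y x).
Qed.

Lemma exists_notin_seq (T : eqType) (s : seq T) :
  ~ finite_set [set: T] -> exists y, y \notin s.
Proof.
move=> T_infinite; apply/not_existsP => s_full; apply: T_infinite.
apply: (@sub_finite_set _ _ [set` s]); last exact: finite_seq.
by move=> y _ /=; apply/negPn/negP/s_full.
Qed.

Lemma expg_eq_sub1 (gT : groupType) (x : gT) i j :
  (x ^+ i = x ^+ j -> x ^+ (j - i) = 1)%g.
Proof.
case: (leqP i j) => [le_ij|/ltnW]; last by rewrite -subn_eq0 => /eqP ->.
by rewrite -{1}(subnKC le_ij) expgnDr -{1}(mulg1 (x ^+ i)%g) => /mulgI ->.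
Qed.

Section Dispersion.
Local Open Scope ring_scope.
Variables (R : realFieldType) (I : finType) (x : I -> R).

Lemma sum_sqr_sub_pairs :
  \sum_t \sum_s (x t - x s) ^+ 2 = 2 * (#|I|%:R * \sum_t x t ^+ 2 - (\sum_t x t) ^+ 2).
Proof.
have sq_t : \sum_(t : I) \sum_(s : I) x t ^+ 2 = #|I|%:R * \sum_t x t ^+ 2.
  by under eq_bigr do rewrite sumr_const; rewrite sumrMnl mulr_natl.
have sq_s : \sum_(t : I) \sum_(s : I) x s ^+ 2 = #|I|%:R * \sum_t x t ^+ 2.
  by rewrite sumr_const mulr_natl.
have cross : \sum_(t : I) \sum_(s : I) (x t * x s) = (\sum_t x t) ^+ 2.
  by rewrite expr2 mulr_suml; apply: eq_bigr => t _; rewrite mulr_sumr.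
transitivity (\sum_(t : I) \sum_(s : I) x t ^+ 2 + \sum_(t : I) \sum_(s : I) x s ^+ 2
   - 2 * \sum_(t : I) \sum_(s : I) (x t * x s)); last by rewrite sq_t sq_s cross; ring.
rewrite -big_split /= mulr_sumr -sumrB; apply: eq_bigr => t _.
by rewrite -big_split /= mulr_sumr -sumrB; apply: eq_bigr => s _; ring.
Qed.

Lemma sqr_sub_le_dispersion i j :
  (x i - x j) ^+ 2 <= 2 * (#|I|%:R * \sum_t x t ^+ 2 - (\sum_t x t) ^+ 2).
Proof.
rewrite -sum_sqr_sub_pairs (bigD1 i) //= (bigD1 j) //= -addrA lerDl addr_ge0 //.
  by apply: sumr_ge0 => s _; exact: sqr_ge0.
by apply: sumr_ge0 => t _; apply: sumr_ge0 => s _; exact: sqr_ge0.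
Qed.

Lemma dispersion_ge0 : 0 <= #|I|%:R * \sum_t x t ^+ 2 - (\sum_t x t) ^+ 2.
Proof.
rewrite -(@pmulr_rge0 _ 2) // -sum_sqr_sub_pairs.
by apply: sumr_ge0 => t _; apply: sumr_ge0 => s _; exact: sqr_ge0.
Qed.

End Dispersion.

Section MonotoneGaps.
Local Open Scope ring_scope.
Variable R : archiRealFieldType.

Lemma nonincreasing_gap_small (u : nat -> R) (eta : R) :
  (forall k, u k.+1 <= u k) -> (forall k, 0 <= u k) -> 0 < eta ->
  exists k, u k - u k.+2 <= eta.
Proof.
move=> u_dec u_ge0 eta_gt0; apply/not_existsP => big_gaps.
have u_even i : u i.*2 <= u 0%N - i%:R * eta.
  elim: i => [|i IH]; first by rewrite mul0r subr0.
  have := big_gaps i.*2; move/negP; rewrite -ltNge doubleS -natr1; lra.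
have u0_ge0 : 0 <= u 0%N / eta by rewrite divr_ge0 // ltW.
have := u_even (Num.bound (u 0%N / eta)); have := u_ge0 (Num.bound (u 0%N / eta)).*2.
have := archi_boundP u0_ge0; rewrite ltr_pdivrMr //; lra.
Qed.

End MonotoneGaps.

Section RealSums.
Local Open Scope ring_scope.
Variable R : realFieldType.

Lemma size_mul_le_sum (T : eqType) (s : seq T) (F : T -> R) (m : R) :
  {in s, forall x, m <= F x} -> (size s)%:R * m <= \sum_(x <- s) F x.
Proof.
elim: s => [|x s IH] F_ge; first by rewrite big_nil mul0r.
rewrite big_cons /= -addn1 natrD mulrDl mul1r addrC lerD ?F_ge ?mem_head //.
by apply: IH => z z_s; apply: F_ge; rewrite inE z_s orbT.
Qed.

Lemma sum_le_of_tail_le (a b : nat -> nat) (eps : R) k0 n : 0 <= eps -> (k0 <= n)%N ->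
  (forall k, a k <= b k)%N -> (forall k, (k0 < k)%N -> (a k)%:R <= eps / 2 * (b k)%:R) ->
  (\sum_(0 <= k < k0.+1) b k)%:R <= eps / 2 * (\sum_(0 <= k < n.+1) b k)%:R ->
  (\sum_(0 <= k < n.+1) a k)%:R <= eps * (\sum_(0 <= k < n.+1) b k)%:R.
Proof.
move=> eps_ge0 k0_n a_b tail head.
rewrite (big_cat_nat _ (n := k0.+1)) //= natrD {1}(splitr eps) mulrDl.
apply: lerD; first by apply: le_trans head; rewrite ler_nat; apply: leq_sum => k _.
rewrite natr_sum; apply: le_trans (_ : _ <= \sum_(k0.+1 <= k < n.+1) eps / 2 * (b k)%:R) _.
  by rewrite big_nat [X in _ <= X]big_nat; apply: ler_sum => k /andP [k0_k _]; exact: tail.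
rewrite -mulr_sumr ler_wpM2l ?divr_ge0 // -natr_sum ler_nat.
by rewrite [X in (_ <= X)%N](big_cat_nat _ (n := k0.+1)) //= leq_addl.
Qed.

End RealSums.

(** * Reduced words, spheres and balls *)

Section ReducedWords.
Variable X : finType.
Local Notation word := (seq (letter X)).
Local Notation L := #|{: letter X}|.

Lemma linvK : involutive (@linv X).
Proof. by case=> x b; rewrite /linv /= negbK. Qed.

Lemma linv_inj : injective (@linv X).
Proof. exact: inv_inj linvK. Qed.

Lemma linv_neq (a : letter X) : a != linv a.
Proof. by case: a => x [] /=; rewrite /linv xpair_eqE eqxx. Qed.

Lemma card_letter_gt1 (a : letter X) : (1 < L)%N.
Proof. by have := max_card (pred2 a (linv a)); rewrite card2 linv_neq. Qed.

Lemma mem_words k w : (w \in words X k) = (size w == k).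
Proof.
elim: k w => [|k IH] [|a w] //=.
- by apply/negP => /allpairsP [[b u] /= [_ _ //]].
apply/allpairsP/idP => [[[b u] /= [_ hu [_ ->]]]|]; first by rewrite eqSS -IH.
by move=> hs; exists (a, w); rewrite mem_enum IH.
Qed.

Lemma uniq_words k : uniq (words X k).
Proof.
elim: k => [|k IH] //=; apply: allpairs_uniq => //; first exact: enum_uniq.
by move=> [a u] [b v] _ _ /= [-> ->].
Qed.

Definition sphere k : seq word := [seq w <- words X k | reduced w].

Lemma mem_sphere k w : (w \in sphere k) = (size w == k) && reduced w.
Proof. by rewrite mem_filter mem_words andbC. Qed.

Lemma uniq_spheres i m : uniq (flatten [seq sphere k | k <- iota i m]).
Proof.
elim: m i => [|m IH] i //=; rewrite cat_uniq filter_uniq ?uniq_words // IH andbT.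
apply/hasPn => w /flattenP [s /mapP [j]]; rewrite mem_iota => /andP [lt_ij _] -> /=.
rewrite !mem_sphere => /andP [/eqP -> _]; apply/negP => /andP [/eqP e _].
by move: lt_ij; rewrite -e ltnn.
Qed.

Lemma ball_spheres n : ball X n = flatten [seq sphere k | k <- iota 0 n.+1].
Proof. by rewrite /ball filter_flatten -map_comp undup_id // uniq_spheres. Qed.

Lemma count_ball (p : pred word) n :
  count p (ball X n) = \sum_(0 <= k < n.+1) count p (sphere k).
Proof. by rewrite ball_spheres count_flatten -map_comp sumnE big_map. Qed.

Lemma ball_reduced n w : w \in ball X n -> reduced w.
Proof. by rewrite mem_undup mem_filter => /andP []. Qed.

Lemma big_sphereS (T : Type) (idx : T) (op : Monoid.com_law idx) k (F : word -> T) :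
  \big[op/idx]_(w <- sphere k.+1) F w =
  \big[op/idx]_(a : letter X)
    \big[op/idx]_(w <- sphere k | ohead w != Some (linv a)) F (a :: w).
Proof.
rewrite /sphere /= big_filter big_mkcond big_allpairs_dep big_enum /=.
apply: eq_bigr => a _; rewrite big_filter_cond [RHS]big_mkcond; apply: eq_bigr => w _.
by case: w => [|b w] //=; rewrite (inj_eq Some_inj) andbC.
Qed.

Lemma card_linv_neq (h : letter X) : #|[pred a | h != linv a]| = L.-1.
Proof.
rewrite -(cardC1 (linv h)); apply: eq_card => a; rewrite !inE.
by apply/negb_inj; rewrite !negbK -{1}(linvK h) (inj_eq linv_inj) eq_sym.
Qed.

Lemma card_linv_neq2 (h h' : letter X) :
  #|[pred a | (h != linv a) && (h' != linv a)]| = L - (h != h').+1.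
Proof.
rewrite -(inj_eq linv_inj) -(card2 (linv h) (linv h')).
rewrite -(cardC (pred2 (linv h) (linv h'))) addKn.
apply: eq_card => a; rewrite !inE negb_or -{1}(linvK h) -{1}(linvK h').
by rewrite !(inj_eq linv_inj) ![a == _]eq_sym.
Qed.

Lemma size_sphere1 : size (sphere 1) = L.
Proof.
rewrite -sum1_size big_sphereS -sum1_card; apply: eq_bigr => a _.
by rewrite /sphere /= big_cons big_nil.
Qed.

Lemma size_sphereSS k : size (sphere k.+2) = L.-1 * size (sphere k.+1).
Proof.
rewrite -!sum1_size big_sphereS (exchange_big_dep xpredT) //= big_distrr /= muln1.
apply: eq_big_seq => -[|b w] w_k; first by rewrite mem_sphere in w_k.
rewrite -(card_linv_neq b) -sum1_card; apply: eq_bigl => a.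
by rewrite !inE (inj_eq Some_inj).
Qed.

Lemma size_sphere_gt0 k : (1 < L)%N -> (0 < size (sphere k))%N.
Proof.
move=> L_gt1; case: k => [|k] //; elim: k => [|k IH]; first by rewrite size_sphere1 ltnW.
by rewrite size_sphereSS muln_gt0 IH -subn1 subn_gt0 L_gt1.
Qed.

Lemma size_ball_gt0 n : (0 < size (ball X n))%N.
Proof. by rewrite -count_predT count_ball big_nat_recl. Qed.

Lemma size_ball_ge n : (1 < L)%N -> (n.+1 <= size (ball X n))%N.
Proof.
move=> L_gt1; rewrite -count_predT count_ball.
apply: (@leq_trans (\sum_(0 <= k < n.+1) 1)); first by rewrite sum_nat_const_nat subn0 muln1.
by apply: leq_sum => k _; rewrite count_predT size_sphere_gt0.
Qed.

Lemma letters_cyclic_or_many (x0 : X) :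
  (exists a : letter X, forall c, c = a \/ c = linv a) \/ (2 < L)%N.
Proof.
case: (leqP #|X| 1) => [X_le1|X_gt1]; last by right; rewrite card_prod card_bool; lia.
left; exists (x0, false) => -[x b]; rewrite (fintype_le1P X_le1 x0 x).
by case: b; [right|left].
Qed.

End ReducedWords.

(** * Upper density *)

Section UpperDensity.
Local Open Scope ring_scope.
Local Open Scope classical_set_scope.
Variable R : realType.

Lemma limn_sup_eq0 (u : nat -> R) :
  (forall e, 0 < e -> exists n0, forall n, (n0 <= n)%N -> 0 <= u n <= e) -> limn_sup u = 0.
Proof.
move=> small; suff u_cvg : u @ \oo --> 0 by have [_ ->] := cvg_limn_inf_sup u_cvg.
apply/cvgrPdist_le => e e_gt0; have [n0 u_small] := small e e_gt0.
exists n0 => // n /= /u_small /andP [u_ge0 u_le].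
by rewrite sub0r normrN ger0_norm.
Qed.

Variables (X : finType) (S : set (seq (letter X))).

Lemma max_ratio_le n (e : R) :
  (forall om, ratio S om n <= e) -> 0 <= max_ratio (R := R) S n <= e.
Proof.
move=> ratio_le; have ratio_ge0 om : 0 <= ratio (R := R) S om n by rewrite divr_ge0.
have ne : [set r : R | exists om, reduced om /\ r = ratio S om n] !=set0.
  by exists (ratio S [::] n), [::].
apply/andP; split; last by apply: ge_sup => // r [om [_ ->]].
apply: le_trans (ratio_ge0 [::]) _; apply: sup_upper_bound; last by exists [::].
by split=> //; exists e => r [om [_ ->]].
Qed.

Lemma upper_density_eq0 :
  (forall eps : R, 0 < eps ->
    exists n0, forall n, (n0 <= n)%N -> forall om, ratio S om n <= eps) ->
  upper_density (R := R) S = 0.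
Proof.
move=> small; apply: limn_sup_eq0 => e e_gt0; have [n0 ratio_small] := small e e_gt0.
by exists n0 => n /ratio_small; exact: max_ratio_le.
Qed.

End UpperDensity.

(** * Fibres of the projection *)

Section Projection.
Variables (X : finType) (gT : groupType) (g : X -> gT).
Local Notation word := (seq (letter X)).
Local Notation L := #|{: letter X}|.
Local Notation sphere := (sphere X).
Local Notation gen := (gen_of (@monoid.inv gT) g).
Local Notation pi := (proj (@monoid.mul gT) (@monoid.one gT) (@monoid.inv gT) g).

Lemma gen_linv a : gen (linv a) = ((gen a)^-1)%g.
Proof. by case: a => x [] /=; rewrite /gen_of /= ?invgK. Qed.

Lemma pi_cons a w : pi (a :: w) = (gen a * pi w)%g.
Proof. by []. Qed.

Lemma pi_cat u v : pi (u ++ v) = (pi u * pi v)%g.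
Proof. by elim: u => [|a u IH] /=; rewrite ?mul1g // IH mulgA. Qed.

Lemma pi_fmul u v : pi (fmul u v) = (pi u * pi v)%g.
Proof.
rewrite /fmul -pi_cat; elim: (u ++ v) => [|a w IH] //; rewrite pi_cons -IH /=.
case: (reduce w) => [|b w'] //=; case: eqP => [->|] //.
by rewrite mulgA gen_linv mulgV mul1g.
Qed.

(* The empty word has no first letter ([ohead] is [None]), so the identities
   relating [nfibre] to full fibres are stated on spheres of radius k.+1. *)
Definition nfibre k t (d : gT) : nat :=
  \sum_(u <- sphere k) ((ohead u == Some t) && (pi u == d)).

Definition head_collisions k : nat :=
  \sum_(u <- sphere k) \sum_(v <- sphere k) ((ohead u == ohead v) && (pi u == pi v)).

Definition collisions k : nat :=
  \sum_(u <- sphere k) \sum_(v <- sphere k) (pi u == pi v : nat).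

(* A pair (a :: u, a :: v) collides iff (u, v) does, and a ranges over the
   L - 1 - [head u != head v] letters that may precede both u and v. *)
Lemma head_collisionsSS k :
  (1 < L)%N -> head_collisions k.+2 = head_collisions k.+1 + (L - 2) * collisions k.+1.
Proof.
move=> L_gt1; rewrite /head_collisions big_sphereS.
rewrite (eq_bigr (fun a => \sum_(u <- sphere k.+1) \sum_(v <- sphere k.+1)
    (((ohead u != Some (linv a)) && (ohead v != Some (linv a))) * (pi u == pi v) : nat)));
  last first.
  move=> a _; rewrite big_mkcond; apply: eq_bigr => u _.
  rewrite big_sphereS (bigD1 a) //= [X in _ + X]big1 ?addn0; last first.
    by move=> b b_a; apply: big1 => v _; rewrite /= (inj_eq Some_inj) eq_sym (negbTE b_a).
  rewrite big_mkcond; case: (ohead u != _) => /=; last by rewrite big1.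
  apply: eq_bigr => v _; rewrite eqxx (inj_eq (mulgI _)).
  by case: (ohead v != _); rewrite ?mul1n.
rewrite exchange_big /collisions big_distrr -big_split /=; apply: eq_big_seq => u u_k.
rewrite exchange_big big_distrr -big_split /=; apply: eq_big_seq => v v_k.
rewrite -big_distrl /= sum_nat_bool.
case: u u_k => [|b u] u_k; first by rewrite mem_sphere in u_k.
case: v v_k => [|c v] v_k; first by rewrite mem_sphere in v_k.
rewrite (eq_card (B := [pred a | (b != linv a) && (c != linv a)])); last first.
  by move=> a; rewrite !inE.
rewrite card_linv_neq2 /= (inj_eq Some_inj).
by case: (b == c); case: (pi (b :: u) == pi (c :: v)); rewrite /= ?muln0 ?muln1; lia.
Qed.

Lemma nfibreSS k a (d : gT) :
  nfibre k.+2 a d = \sum_(t | t != linv a) nfibre k.+1 t ((gen a)^-1 * d)%g.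
Proof.
rewrite /nfibre big_sphereS (bigD1 a) //= [X in _ + X]big1 ?addn0; last first.
  by move=> b b_a; apply: big1 => v _; rewrite /= (inj_eq Some_inj) (negbTE b_a).
rewrite exchange_big /= big_mkcond /=; apply: eq_big_seq => u u_k.
rewrite eqxx -(inj_eq (mulgI ((gen a)^-1)%g)) mulKg.
case: u u_k => [|b u] u_k; first by rewrite mem_sphere in u_k.
rewrite /= (inj_eq Some_inj); case: (boolP (b != linv a)) => b_a.
  rewrite (bigD1 b) //= eqxx big1 ?addn0 // => t /andP [_ t_b].
  by rewrite (inj_eq Some_inj) eq_sym (negbTE t_b).
move: b_a; rewrite negbK => /eqP ->; rewrite big1 // => t t_a.
by rewrite (inj_eq Some_inj) eq_sym (negbTE t_a).
Qed.

Lemma head_collisions_fibres k (ys : seq gT) :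
  uniq ys -> {in sphere k.+1, forall u, pi u \in ys} ->
  head_collisions k.+1 = \sum_(y <- ys) \sum_t nfibre k.+1 t y * nfibre k.+1 t y.
Proof.
move=> uys ys_pi; rewrite exchange_big /=.
under eq_bigr do rewrite sum_fibre_products //.
rewrite /head_collisions [RHS]exchange_big /=; apply: eq_big_seq => u u_k.
rewrite [RHS]exchange_big /=; apply: eq_bigr => v _.
case: u u_k => [|b u] u_k; first by rewrite mem_sphere in u_k.
rewrite (bigD1 b) //= big1 ?addn0 => [|t t_b]; first by rewrite eqxx eq_sym.
by rewrite (inj_eq Some_inj) eq_sym (negbTE t_b).
Qed.

Lemma sum_nfibre k (d : gT) :
  \sum_t nfibre k.+1 t d = \sum_(u <- sphere k.+1) (pi u == d : nat).
Proof.
rewrite exchange_big /=; apply: eq_big_seq => u u_k.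
case: u u_k => [|b u] u_k; first by rewrite mem_sphere in u_k.
rewrite (bigD1 b) //= eqxx big1 ?addn0 // => t t_b.
by rewrite (inj_eq Some_inj) eq_sym (negbTE t_b).
Qed.

Lemma count_sphere_fibre k (d : gT) :
  count (fun u => pi u == d) (sphere k.+1) = (\sum_t nfibre k.+1 t d)%N.
Proof.
by rewrite sum_nfibre -sum1_count big_mkcond; apply: eq_bigr => u _; case: (_ == _).
Qed.

Lemma collisions_fibres k (ys : seq gT) :
  uniq ys -> {in sphere k.+1, forall u, pi u \in ys} ->
  collisions k.+1 = \sum_(y <- ys) (\sum_t nfibre k.+1 t y) * (\sum_t nfibre k.+1 t y).
Proof.
move=> uys ys_pi; under eq_bigr do rewrite sum_nfibre.
exact: esym (sum_fibre_products (sphere k.+1) xpredT xpredT uys ys_pi).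
Qed.

Lemma sum_nfibre_uniq k t (ys : seq gT) :
  uniq ys -> \sum_(y <- ys) nfibre k t y <= size (sphere k).
Proof.
move=> uys; rewrite /nfibre exchange_big /= -sum1_size; apply: leq_sum => u _.
apply: (@leq_trans (\sum_(y <- ys) (pi u == y : nat))).
  by apply: leq_sum => y _; case: (ohead u == Some t).
rewrite (eq_bigr (fun y => if pi u == y then 1 else 0)) => [|y _]; last by case: (_ == _).
rewrite -big_mkcond sum1_count (eq_count (a2 := pred1 (pi u))) => [|y]; last first.
  by rewrite /= eq_sym.
by rewrite count_uniq_mem // leq_b1.
Qed.

Section InfiniteGroup.
Hypothesis pi_surj : forall y : gT, exists w, pi w = y.
Hypothesis gT_infinite : ~ finite_set [set: gT].

Lemma exists_even_words (a0 : letter X) K : exists ws : seq word,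
  [/\ size ws = K, uniq (map pi ws) & all (fun w => ~~ odd (size w)) ws].
Proof.
elim: K => [|K [ws [size_ws uws even_ws]]]; first by exists [::].
pose shifted := map (fun h => h * (gen a0)^-1)%g (map pi ws).
have [y] := exists_notin_seq (map pi ws ++ shifted) gT_infinite; rewrite mem_cat negb_or.
case/andP => y_new y_shifted_new; have [w pi_w] := pi_surj y.
case: (boolP (odd (size w))) => odd_w.
  exists ((w ++ [:: a0]) :: ws); split; rewrite /= ?size_ws ?size_cat ?addn1 /= ?odd_w //.
  rewrite uws andbT pi_cat pi_w /= mulg1; apply: contra y_shifted_new => y_a0_old.
  by rewrite -[y](mulgK (gen a0)); apply: map_f.
exists (w :: ws); split; rewrite /= ?size_ws ?odd_w //.
by rewrite uws andbT pi_w.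
Qed.

Section CyclicCase.
Variable a : letter X.
Hypothesis cyclic_letters : forall c : letter X, c = a \/ c = linv a.

Lemma pi_nseq n c : pi (nseq n c) = (gen c ^+ n)%g.
Proof. by elim: n => [|n IH] //=; rewrite IH expgS. Qed.

Lemma reduced_cyclic w : reduced w -> w = nseq (size w) (head a w).
Proof.
elim: w => [|c [|d w] IH] //= /andP [d_c red_dw]; congr (_ :: _).
suff -> : c = d by exact: IH.
by move: d_c; case: (cyclic_letters c) => ->; case: (cyclic_letters d) => ->;
  rewrite ?linvK ?eqxx.
Qed.

Lemma finite_of_torsion p : (0 < p)%N -> (gen a ^+ p = 1)%g -> finite_set [set: gT].
Proof.
move=> p_gt0 a_p.
have inv_a : ((gen a)^-1 = gen a ^+ p.-1)%g by apply: mulg1_eq; rewrite -expgS prednK.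
have pow_a w : exists n, pi w = (gen a ^+ n)%g.
  elim: w => [|c w [n pi_w]]; first by exists 0%N.
  case: (cyclic_letters c) => ->; first by exists n.+1; rewrite pi_cons pi_w expgS.
  by exists (p.-1 + n)%N; rewrite pi_cons pi_w gen_linv inv_a expgnDr.
apply: (@sub_finite_set _ _ [set` map (fun i => gen a ^+ i)%g (iota 0 p)]); last first.
  exact: finite_seq.
move=> y _; have [w <-] := pi_surj y; have [n ->] := pow_a w.
rewrite /= (divn_eq n p) expgnDr mulnC expgnA a_p expg1n mul1g.
by apply: map_f; rewrite mem_iota ltn_pmod.
Qed.

Lemma gen_expg_eq1 c n : (gen c ^+ n = 1)%g -> n = 0%N.
Proof.
have torsion_free m : (gen a ^+ m = 1)%g -> m = 0%N.
  by case: m => // m /(finite_of_torsion (ltn0Sn m)).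
case: (cyclic_letters c) => ->; first exact: torsion_free.
by rewrite gen_linv expVgn => /eqP; rewrite invg_eq1 => /eqP /torsion_free.
Qed.

Lemma pi_inj_reduced u v : reduced u -> reduced v -> pi u = pi v -> u = v.
Proof.
move=> /reduced_cyclic -> /reduced_cyclic ->; rewrite !pi_nseq.
set i := size u; set j := size v; set c := head a u; set c' := head a v.
have c'_c : c' = c \/ c' = linv c.
  case: (cyclic_letters c) => ->; case: (cyclic_letters c') => ->; rewrite ?linvK; tauto.
case: c'_c => -> e.
  have /gen_expg_eq1/eqP := expg_eq_sub1 e; have /gen_expg_eq1/eqP := expg_eq_sub1 (esym e).
  by rewrite !subn_eq0 => ij ji; rewrite (@anti_leq i j) ?ij.
rewrite gen_linv expVgn in e.
have /gen_expg_eq1/eqP : (gen c ^+ (i + j) = 1)%g by rewrite expgnDr e mulVg.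
by rewrite addn_eq0 => /andP [/eqP -> /eqP ->].
Qed.

End CyclicCase.
End InfiniteGroup.

(** * Collision energy and almost invariant fibres *)

Section RealCounts.
Local Open Scope ring_scope.
Variable R : archiRealFieldType.

Definition nsphere k : R := (size (sphere k))%:R.
Definition head_energy k : R := (head_collisions k)%:R / nsphere k ^+ 2.
Definition gap_const : R := 2 * (L%:R - 1) ^+ 2 / (L%:R - 2).

Lemma collisions_dispersion k (ys : seq gT) :
  uniq ys -> {in sphere k.+1, forall u, pi u \in ys} ->
  L%:R * (head_collisions k.+1)%:R - (collisions k.+1)%:R =
  \sum_(d <- ys)
    (L%:R * \sum_t (nfibre k.+1 t d)%:R ^+ 2 - (\sum_t (nfibre k.+1 t d)%:R) ^+ 2) :> R.
Proof.
move=> uys ys_pi; rewrite (head_collisions_fibres uys ys_pi) (collisions_fibres uys ys_pi).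
rewrite sumrB !natr_sum mulr_sumr; congr (_ - _); apply: eq_bigr => d _.
  by rewrite natr_sum; congr (_ * _); apply: eq_bigr => t _; rewrite natrM expr2.
by rewrite natrM natr_sum expr2.
Qed.

Lemma collisions_le_head k :
  (collisions k.+1)%:R <= L%:R * (head_collisions k.+1)%:R :> R.
Proof.
rewrite -subr_ge0 (@collisions_dispersion k (undup (map pi (sphere k.+1)))) ?undup_uniq //.
  by apply: sumr_ge0 => d _; exact: dispersion_ge0.
by move=> u u_k; rewrite mem_undup map_f.
Qed.

Lemma nfibre_spread k t t' (d0 : gT) :
  ((nfibre k.+1 t d0)%:R - (nfibre k.+1 t' d0)%:R) ^+ 2 <=
    2 * (L%:R * (head_collisions k.+1)%:R - (collisions k.+1)%:R) :> R.
Proof.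
set ys := undup (d0 :: map pi (sphere k.+1)).
have ys_pi : {in sphere k.+1, forall u, pi u \in ys}.
  by move=> u u_k; rewrite mem_undup inE map_f ?orbT.
rewrite (collisions_dispersion (undup_uniq _) ys_pi).
rewrite (bigD1_seq d0) ?mem_undup ?inE ?eqxx ?undup_uniq //=.
have := sqr_sub_le_dispersion (fun s => (nfibre k.+1 s d0)%:R : R) t t'.
suff : 0 <= \sum_(d <- ys | d != d0)
  (L%:R * \sum_s (nfibre k.+1 s d)%:R ^+ 2 - (\sum_s (nfibre k.+1 s d)%:R) ^+ 2) :> R.
  by rewrite /=; lra.
by apply: sumr_ge0 => d _; exact: dispersion_ge0.
Qed.

Lemma head_energy_ge0 k : 0 <= head_energy k.
Proof. by rewrite divr_ge0 // exprn_ge0. Qed.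

Definition ball_fibres_vanish : Prop :=
  forall eps : R, 0 < eps -> exists n0, forall n, (n0 <= n)%N -> forall d : gT,
    (count (fun u => pi u == d) (ball X n))%:R <= eps * (size (ball X n))%:R.

Section ManyLetters.
Hypothesis L_gt2 : (2 < L)%N.

Lemma nsphere_gt0 k : 0 < nsphere k.
Proof. by rewrite ltr0n size_sphere_gt0 // ltnW. Qed.

Lemma gap_const_gt0 : 0 < gap_const.
Proof.
have L_ge3 : (3%:R : R) <= L%:R by rewrite ler_nat.
by rewrite divr_gt0 // ?mulr_gt0 ?exprn_gt0 //; lra.
Qed.

Lemma dispersion_energy_gap k :
  2 * (L%:R * (head_collisions k.+1)%:R - (collisions k.+1)%:R) =
  gap_const * nsphere k.+1 ^+ 2 * (head_energy k.+1 - head_energy k.+2).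
Proof.
have N_gt0 := nsphere_gt0 k.+1.
rewrite /head_energy head_collisionsSS 1?ltnW // /nsphere size_sphereSS.
rewrite natrD !natrM natrB 1?ltnW // -subn1 natrB; last by lia.
have L2_neq0 : (L%:R - 2 : R) != 0 by rewrite subr_eq0 -[2]/(2%:R : R) eqr_nat; lia.
have L1_neq0 : (L%:R - 1 : R) != 0 by rewrite subr_eq0 pnatr_eq1; lia.
by rewrite /gap_const; field; rewrite L2_neq0 L1_neq0 gt_eqF.
Qed.

Lemma head_energy_nonincreasing k : head_energy k.+2 <= head_energy k.+1.
Proof.
have CN_gt0 := mulr_gt0 gap_const_gt0 (exprn_gt0 2 (nsphere_gt0 k.+1)).
rewrite -subr_ge0 -(pmulr_rge0 _ CN_gt0) -dispersion_energy_gap pmulr_rge0 // subr_ge0.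
exact: collisions_le_head.
Qed.

Definition head_balanced k (th : R) : Prop :=
  forall t t' (y : gT), `|(nfibre k t y)%:R - (nfibre k t' y)%:R| <= th * nsphere k.

Lemma head_balanced_of_gap k th : 0 <= th ->
  head_energy k.+1 - head_energy k.+2 <= th ^+ 2 / gap_const -> head_balanced k.+1 th.
Proof.
move=> th_ge0 gap t t' y.
have C_gt0 := gap_const_gt0; have N_gt0 := nsphere_gt0 k.+1.
rewrite -ler_sqr ?nnegrE ?normr_ge0 ?mulr_ge0 ?(ltW N_gt0) // real_normK ?num_real //.
apply: le_trans (nfibre_spread k t t' y) _.
by rewrite dispersion_energy_gap // exprMn mulrAC ler_pM2r ?exprn_gt0 // mulrC -ler_pdivlMr.
Qed.

Lemma nfibreSS_near k th t0 a (d : gT) : head_balanced k.+1 th ->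
  `|(nfibre k.+2 a d)%:R - L.-1%:R * (nfibre k.+1 t0 ((gen a)^-1 * d)%g)%:R|
    <= L.-1%:R * (th * nsphere k.+1).
Proof.
move=> bal; have card_a : #|[pred t | t != linv a]| = L.-1.
  by rewrite -(cardC1 (linv a)); apply: eq_card => t; rewrite !inE.
rewrite nfibreSS natr_sum [X in _ - X]mulr_natl -card_a -sumr_const -sumrB.
apply: le_trans (ler_norm_sum _ _ _) _.
apply: le_trans (ler_sum _ (fun t _ => bal t t0 _)) _.
by rewrite sumr_const card_a mulr_natl.
Qed.

(* Both y and gen c * (gen a * y) are obtained from the level k + 2 fibre over
   gen a * y by stripping a first letter (a, resp. linv c). *)
Lemma nfibre_near_shift k th t0 c a (y : gT) :
  head_balanced k.+1 th -> head_balanced k.+2 th ->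
  `|(nfibre k.+1 t0 (gen c * (gen a * y))%g)%:R - (nfibre k.+1 t0 y)%:R|
    <= 3 * th * nsphere k.+1.
Proof.
move=> bal1 bal2.
have near_a := nfibreSS_near t0 a (gen a * y)%g bal1; rewrite mulKg in near_a.
have near_c := nfibreSS_near t0 (linv c) (gen a * y)%g bal1.
rewrite gen_linv invgK in near_c.
have := bal2 a (linv c) (gen a * y)%g; move: near_a near_c.
rewrite /nsphere size_sphereSS natrM -/(nsphere k.+1).
have L1_gt0 : 0 < (L.-1%:R : R) by rewrite ltr0n; lia.
set fz := ((nfibre k.+1 t0 _)%:R : R); set fy := ((nfibre k.+1 t0 y)%:R : R).
set ca := ((nfibre k.+2 a _)%:R : R); set cc := ((nfibre k.+2 (linv c) _)%:R : R).
rewrite !ler_norml => /andP [? ?] /andP [? ?] /andP [? ?].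
by apply/andP; split; nra.
Qed.

Lemma even_word_shift (f : gT -> R) (B : R) :
  (forall c a (y : gT), `|f (gen c * (gen a * y))%g - f y| <= B) ->
  forall n w (y : gT), size w = n.*2 -> `|f (pi w * y)%g - f y| <= n%:R * B.
Proof.
move=> shift2; elim=> [|n IH] [|c [|a w]] y //=; first by rewrite mul1g subrr normr0 mul0r.
rewrite doubleS => -[] /(IH _ y) IHw.
rewrite -!mulgA -(subrKA (f (pi w * y)%g)).
by apply: le_trans (ler_normD _ _) _; rewrite mulrSr addrC mulrDl mul1r lerD.
Qed.

Lemma nfibre_translates_le k th r (ws : seq word) t0 (d : gT) :
  head_balanced k.+1 th -> head_balanced k.+2 th ->
  0 <= th -> uniq (map pi ws) ->
  {in ws, forall w, ~~ odd (size w) && (size w <= r.*2)%N} ->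
  (size ws)%:R * ((nfibre k.+1 t0 d)%:R - r%:R * (3 * th * nsphere k.+1)) <= nsphere k.+1.
Proof.
move=> bal1 bal2 th_ge0 uws ws_r.
have shift := even_word_shift (fun c a y => nfibre_near_shift t0 c a y bal1 bal2).
have B_ge0 : 0 <= 3 * th * nsphere k.+1 by rewrite !mulr_ge0 ?ler0n.
apply: le_trans (size_mul_le_sum (F := fun w => (nfibre k.+1 t0 (pi w * d)%g)%:R) _) _.
  move=> w /ws_r /andP [even_w w_r].
  have := shift _ w d (esym (even_halfK even_w)); rewrite ler_norml => /andP [w_near _].
  have : (size w)./2%:R <= r%:R :> R by rewrite ler_nat -leq_double (even_halfK even_w).
  by move: w_near B_ge0; rewrite /=; set B := 3 * th * _; nra.
rewrite -natr_sum ler_nat -(big_map (fun w => pi w * d)%g xpredT).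
apply: sum_nfibre_uniq; rewrite (map_comp (fun h => h * d)%g) map_inj_uniq //.
exact: mulIg.
Qed.

Lemma exists_balanced_pair th : 0 < th ->
  exists k, head_balanced k.+1 th /\ head_balanced k.+2 th.
Proof.
move=> th_gt0; have eta_gt0 : 0 < th ^+ 2 / gap_const.
  by rewrite divr_gt0 ?exprn_gt0 ?gap_const_gt0.
have [k gap] := nonincreasing_gap_small (u := fun k => head_energy k.+1)
  head_energy_nonincreasing (fun k => head_energy_ge0 k.+1) eta_gt0.
have mono1 := head_energy_nonincreasing k.
have mono2 := head_energy_nonincreasing k.+1.
by exists k; split; apply: head_balanced_of_gap (ltW th_gt0) _ => //=; lra.
Qed.

Lemma nfibre_bound_succ k (kap : R) :
  (forall t d, (nfibre k.+1 t d)%:R <= kap * nsphere k.+1) ->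
  forall t d, (nfibre k.+2 t d)%:R <= kap * nsphere k.+2.
Proof.
move=> bound a d; rewrite nfibreSS natr_sum.
apply: le_trans (ler_sum _ (fun t _ => bound t _)) _.
rewrite sumr_const (_ : #|_| = L.-1); last by rewrite -(cardC1 (linv a)); exact: eq_card.
by rewrite /nsphere size_sphereSS natrM -mulrnAr -mulr_natl.
Qed.

Hypothesis pi_surj : forall y : gT, exists w, pi w = y.
Hypothesis gT_infinite : ~ finite_set [set: gT].

(* The bound holds at a balanced level k1 + 1, by nfibre_translates_le with about
   2 / kap even words and th adapted to their lengths, and is then inherited. *)
Lemma nfibre_eventually_small (kap : R) : 0 < kap ->
  exists k0, forall k, (k0 <= k)%N -> forall t d, (nfibre k.+1 t d)%:R <= kap * nsphere k.+1.
Proof.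
move=> kap_gt0; have [a0 _] : exists a0 : letter X, a0 \in predT.
  by apply/card_gt0P; apply: leq_trans L_gt2.
pose K := Num.bound (2 / kap).
have [ws [size_ws uws /allP even_ws]] := exists_even_words pi_surj gT_infinite a0 K.
pose r := (\max_(w <- ws) size w)%N.
have ws_r : {in ws, forall w, ~~ odd (size w) && (size w <= r.*2)%N}.
  move=> w w_ws; rewrite even_ws //= -addnn (leq_trans _ (leq_addr r r)) //.
  by rewrite /r; apply: (@leq_bigmax_seq _ ws xpredT (fun w => size w) w w_ws isT).
pose th := kap / (6 * (r%:R + 1)).
have r1_gt0 : 0 < 6 * (r%:R + 1) :> R by rewrite mulr_gt0 // ltr_wpDl.
have th_gt0 : 0 < th by rewrite divr_gt0.
have r_th : r%:R * (3 * th) <= kap / 2.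
  have : th * (6 * (r%:R + 1)) = kap by rewrite mulfVK ?gt_eqF.
  lra.
have K_kap : 1 <= K%:R * (kap / 2).
  have := archi_boundP (divr_ge0 (ler0n R 2) (ltW kap_gt0)).
  by rewrite ltr_pdivrMr // => ?; lra.
have [k1 [bal1 bal2]] := exists_balanced_pair th_gt0.
exists k1 => k /subnK <-; elim: (k - k1)%N => [|j IH] t d; last first.
  by rewrite addSn; apply: nfibre_bound_succ.
have := nfibre_translates_le t d bal1 bal2 (ltW th_gt0) uws ws_r.
have N_gt0 := nsphere_gt0 k1.+1; rewrite size_ws add0n.
set f := (nfibre _ t d)%:R; set N := nsphere _ => trans_le.
have B_le : r%:R * (3 * th * N) <= kap / 2 * N by rewrite mulrA ler_pM2r.
have K_gt0 : 0 < K%:R :> R.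
  by rewrite ltr0n lt0n; apply: contraTneq K_kap => ->; rewrite mul0r ler10.
have : f - r%:R * (3 * th * N) <= kap / 2 * N.
  rewrite -(ler_pM2l K_gt0); apply: le_trans trans_le _.
  by rewrite mulrA -[X in X <= _]mul1r ler_pM2r.
by rewrite {2}(splitr kap) mulrDl; lra.
Qed.

Lemma ball_fibres_vanish_noncyclic : ball_fibres_vanish.
Proof.
move=> eps eps_gt0; have L_gt0 : 0 < L%:R :> R by rewrite ltr0n (ltn_trans _ L_gt2).
have kap_gt0 : 0 < eps / 2 / L%:R by rewrite !divr_gt0.
have [k0 small] := nfibre_eventually_small kap_gt0.
pose B0 := (size (ball X k0))%:R : R.
have B0_ge0 : 0 <= 2 * B0 / eps by rewrite divr_ge0 ?mulr_ge0 // ltW.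
exists (maxn k0 (Num.bound (2 * B0 / eps))) => n; rewrite geq_max => /andP [k0_n n_big] d.
rewrite count_ball -count_predT count_ball.
apply: sum_le_of_tail_le (ltW eps_gt0) k0_n _ _ _ => [k|[//|k] /= k0_k|].
- exact: sub_count.
- rewrite count_sphere_fibre natr_sum count_predT.
  apply: le_trans (ler_sum _ (fun t _ => small k k0_k t d)) _.
  by rewrite sumr_const -[_ *+ _]mulr_natr mulrAC divfK ?gt_eqF.
rewrite -!count_ball !count_predT -/B0 mulrAC.
have : 2 * B0 / eps < n.+1%:R.
  by apply: lt_le_trans (archi_boundP B0_ge0) _; rewrite ler_nat leqW.
rewrite ltr_pdivrMr // mulrC => B0_lt.
have : n.+1%:R <= (size (ball X n))%:R :> R.
  by rewrite ler_nat (size_ball_ge _ (ltnW L_gt2)).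
rewrite -(ler_pM2l eps_gt0); lra.
Qed.

End ManyLetters.

Lemma ball_fibres_vanish_cyclic a :
  (forall c : letter X, c = a \/ c = linv a) -> (forall y : gT, exists w, pi w = y) ->
  ~ finite_set [set: gT] -> ball_fibres_vanish.
Proof.
move=> cyclic_letters pi_surj gT_infinite eps eps_gt0; exists (Num.bound (1 / eps)) => n n_big d.
have fibre_le1 : (count (fun u => pi u == d) (ball X n))%:R <= 1 :> R.
  rewrite lern1 count_le1 ?undup_uniq // => u v /ball_reduced red_u /ball_reduced red_v.
  move=> /eqP pi_u /eqP pi_v; apply: (pi_inj_reduced pi_surj gT_infinite cyclic_letters) => //.
  by rewrite pi_u pi_v.
have : n.+1%:R <= (size (ball X n))%:R :> R.
  by rewrite ler_nat (size_ball_ge _ (card_letter_gt1 a)).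
have : 1 / eps < n.+1%:R.
  apply: lt_le_trans (archi_boundP (divr_ge0 ler01 (ltW eps_gt0))) _.
  by rewrite ler_nat leqW.
rewrite ltr_pdivrMr // mulrC -(ler_pM2l eps_gt0); lra.
Qed.

End RealCounts.

Section KernelDensity.
Local Open Scope ring_scope.
Variable R : realType.
Local Notation ker := (kerproj (@monoid.mul gT) (@monoid.one gT) (@monoid.inv gT) g).
Hypothesis pi_surj : forall y : gT, exists w, pi w = y.
Hypothesis gT_infinite : ~ finite_set [set: gT].

Lemma ratio_kerproj_le (om : seq (letter X)) n :
  ratio (R := R) ker om n <=
    (count (fun u => pi u == (pi om)^-1%g) (ball X n))%:R / (size (ball X n))%:R.
Proof.
rewrite /ratio ler_pM2r ?invr_gt0 ?ltr0n ?size_ball_gt0 // ler_nat.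
apply: leq_trans (count_undup _ _) _; rewrite count_map.
apply: sub_count => u /asboolP [_]; rewrite /= pi_fmul => /(canRL (mulKg _)) ->.
by rewrite mulg1.
Qed.

Lemma ball_fibres_vanish_infinite : ball_fibres_vanish R.
Proof.
have [x0 _|X_empty] := pickP (@predT X).
  have [[a cyclic]|L_gt2] := letters_cyclic_or_many x0.
    exact: (ball_fibres_vanish_cyclic (R := R) cyclic pi_surj gT_infinite).
  exact: (ball_fibres_vanish_noncyclic (R := R) L_gt2 pi_surj gT_infinite).
case: gT_infinite; apply: (@sub_finite_set _ _ [set 1%g]); last exact: finite_set1.
by move=> y _; have [[|a w] <-] := pi_surj y; last by have := X_empty a.1.
Qed.

Lemma kerproj_upper_density_eq0 : upper_density (R := R) ker = 0.
Proof.
apply: upper_density_eq0 => eps eps_gt0.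
have [n0 small] := ball_fibres_vanish_infinite eps_gt0.
exists n0 => n n0_n om; apply: le_trans (ratio_kerproj_le om n) _.
by rewrite ler_pdivrMr ?ltr0n ?size_ball_gt0 // small.
Qed.

End KernelDensity.
End Projection.

Section GroupOfAxioms.
Variables (G : Type) (mul : G -> G -> G) (one : G) (inv : G -> G).
Hypothesis G_group : is_group mul one inv.

Let mulA : associative mul. Proof. by case: G_group. Qed.
Let mul1g : left_id one mul. Proof. by case: G_group. Qed.
Let mulVg : left_inverse one inv mul. Proof. by case: G_group. Qed.

Let mulgV : right_inverse one inv mul.
Proof.
move=> a; rewrite -[mul a _]mul1g -(mulVg (inv a)) -mulA (mulA (inv a)) mulVg mul1g.
by rewrite mulVg.
Qed.

Let mulg1 : right_id one mul.
Proof. by move=> a; rewrite -(mulVg a) mulA mulgV mul1g. Qed.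

Definition group_of_axioms : Type := {classic G}.
HB.instance Definition _ := Choice.on group_of_axioms.
HB.instance Definition _ := isGroup.Build group_of_axioms mulA mul1g mulg1 mulVg mulgV.

Lemma kerproj_negligible (X : finType) (g : X -> G) (R : realType) :
  generates mul one inv g -> ~ finite_set [set: G] ->
  upper_density (R := R) (kerproj mul one inv g) = 0%R.
Proof. exact: (@kerproj_upper_density_eq0 X group_of_axioms g R). Qed.

End GroupOfAxioms.

Theorem theorem2p5 (R : realType) (X : finType) (G : Type)
  (mul : G -> G -> G) (one : G) (inv : G -> G) (g : X -> G) :
  is_group mul one inv ->
  injective g ->
  generates mul one inv g ->
  ~ finite_set [set: G] ->
  upper_density (R := R) (kerproj mul one inv g) = 0%R.
Proof.
by move=> G_group _; exact: kerproj_negligible.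
Qed.
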